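(* Let $\Theta_n^{(\eta)}$ and $\Theta_n^{(f)}$ be sets of real functions on the covariate space, where every $f\in\Theta_n^{(f)}$ satisfies $\|f\|_\infty\le N_n$ for a number $N_n>0$, and let $\Theta_n=\Theta_n^{(\eta)}\times\Theta_n^{(f)}$, whose elements $(\eta,f)$ are identified with the conditional densities $\mathcal{P}_{\eta,V}$, $V=e^f$. Then, for every $\epsilon>0$, $$\log N(3\epsilon,\Theta_n,d_n)\lesssim\log N(\epsilon/e^{N_n},\Theta_n^{(\eta)},\|\cdot\|_n)+\log N(\epsilon,\Theta_n^{(f)},\|\cdot\|_n),$$ where the constant implicit in $\lesssim$ does not depend on $\epsilon$ or $n$.
   Context: Let $Q$ be a probability measure on the covariate space $[0,1]^d$ (either the covariate distribution or the empirical measure of fixed design points). For functions $\eta$ and $V>0$ let $\mathcal{P}_{\eta,V}(y\mid x)=(2\pi V(x))^{-1/2}\exp(-(y-\eta(x))^2/(2V(x)))$, and let $d_n^2(\mathcal{P}_{\eta_1,V_1},\mathcal{P}_{\eta_2,V_2})=\int\!\!\int(\mathcal{P}_{\eta_1,V_1}^{1/2}-\mathcal{P}_{\eta_2,V_2}^{1/2})^2\,dy\,dQ(x)$. $\|\cdot\|_n$ denotes the norm of $L_2(Q)$ and $\|\cdot\|_\infty$ the supremum norm. $N(\epsilon,S,\rho)$ is the $\epsilon$-covering number of $S$ with respect to $\rho$ (minimal number of $\rho$-balls of radius $\epsilon$ covering $S$). *)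

From HB Require Import structures.
From mathcomp Require Import all_boot all_order all_algebra.
From mathcomp Require Import all_classical all_reals all_analysis.
Set Implicit Arguments. Unset Strict Implicit. Unset Printing Implicit Defensive.
Import Order.TTheory GRing.Theory Num.Theory.
Local Open Scope classical_set_scope.
Local Open Scope ring_scope.

Definition cube (R : realType) (d : nat) : set (d.-tuple R) :=
  [set x | forall i : 'I_d, 0 <= tnth x i <= 1].

Definition gdens (R : realType) (m v y : R) : R :=
  (Num.sqrt (2 * pi * v))^-1 * expR (- (y - m) ^+ 2 / (2 * v)).

Definition cdens (R : realType) (T : Type) (p : (T -> R) * (T -> R)) (x : T) (y : R) : R :=
  gdens (p.1 x) (expR (p.2 x)) y.

Definition hell2 (R : realType) (dT : measure_display) (T : measurableType dT)
  (Q : probability T R) (p1 p2 : (T -> R) * (T -> R)) : \bar R :=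
  (\int[Q]_x \int[@lebesgue_measure R]_y
     ((Num.sqrt (cdens p1 x y) - Num.sqrt (cdens p2 x y)) ^+ 2)%:E)%E.

Definition dn (R : realType) (dT : measure_display) (T : measurableType dT)
  (Q : probability T R) (p1 p2 : (T -> R) * (T -> R)) : \bar R :=
  match hell2 Q p1 p2 with
  | r%:E => (Num.sqrt r)%:E
  | +oo%E => +oo%E
  | -oo%E => 0%E
  end.

Definition L2dist (R : realType) (dT : measure_display) (T : measurableType dT)
  (Q : probability T R) (g1 g2 : T -> R) : \bar R :=
  Lnorm Q 2%:E (fun x => (g1 x - g2 x)%:E).

(* eps-covering number of S w.r.t. rho, with (closed) balls centred at points of Cen:
   the least n such that n balls of radius eps cover S; +oo if there is none. *)
Definition covnum (R : realType) (U : Type) (Cen : set U) (rho : U -> U -> \bar R)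
  (eps : R) (S : set U) : \bar R :=
  ereal_inf [set (n%:R)%:E | n in [set n : nat | exists c : 'I_n -> U,
     (forall i, Cen (c i)) /\
     (forall s, S s -> exists i, (rho (c i) s <= eps%:E)%E)]].

Definition elog (R : realType) (x : \bar R) : \bar R :=
  match x with
  | r%:E => (ln r)%:E
  | +oo%E => +oo%E
  | -oo%E => -oo%E
  end.

Definition mfuns (R : realType) (dT : measure_display) (T : measurableType dT) : set (T -> R) :=
  [set g | measurable_fun setT g].

Arguments cube R d : clear implicits.
Arguments mfuns R {dT} T.

From HB Require Import structures.
From mathcomp Require Import all_boot all_order all_algebra.
From mathcomp Require Import all_classical all_reals all_analysis.
From mathcomp Require Import normal_distribution measurable_realfun.
From mathcomp Require Import ring lra.
Import Order.TTheory GRing.Theory Num.Theory.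
Local Open Scope classical_set_scope.
Local Open Scope ring_scope.

(* Write [P_i] for the Gaussian density with mean [m_i] and variance
   [v_i = exp f_i]. The geometric mean [sqrt (P_1 P_2)] is a Gaussian density
   times the Bhattacharyya coefficient
     [BC = sqrt (2 sqrt (v_1 v_2) / (v_1 + v_2)) * exp (- (m_1 - m_2)^2 / (4 (v_1 + v_2)))],
   so the inner integral of [d_n^2] is [2 - 2 BC], and elementary bounds on
   [exp] give [2 - 2 BC <= (f_1 - f_2)^2 / 2 + (m_1 - m_2)^2 / (2 v_2)].
   When [|f_2| <= N_n] Q-a.s., integrating over Q yields
   [d_n^2 <= ||f_1 - f_2||_n^2 / 2 + exp N_n ||eta_1 - eta_2||_n^2 / 2], so the
   product of an [eps / exp N_n]-cover of [Theta_eta] and an [eps]-cover of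
   [Theta_f] is an [eps]-cover of [Theta_n] for [d_n]; taking logarithms of
   cardinalities gives the bound with constant 1. *)

Set Implicit Arguments. Unset Strict Implicit.

Section gaussian_hellinger.
Variable R : realType.
Implicit Types m f y : R.

Lemma expR_half_sqr (a : R) : expR (a / 2) ^+ 2 = expR a.
Proof. by rewrite -expRM_natr -mulrA mulVf ?mulr1 // pnatr_eq0. Qed.

Lemma sqrtr_expR (a : R) : Num.sqrt (expR a) = expR (a / 2).
Proof. by rewrite -expR_half_sqr sqrtr_sqr ger0_norm // expR_ge0. Qed.

Lemma gdens_expR m f y :
  gdens m (expR f) y = expR (- (ln (2 * pi) + f) / 2 - (y - m) ^+ 2 / (2 * expR f)).
Proof.
have pi2_gt0 : 0 < 2 * pi :> R by rewrite mulr_gt0 ?pi_gt0.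
rewrite /gdens.
have -> : 2 * pi * expR f = expR (ln (2 * pi) + f) by rewrite expRD lnK ?posrE.
by rewrite sqrtr_expR -expRN expRD -!mulNr.
Qed.

Lemma gdens_normal_pdf m f y : gdens m (expR f) y = normal_pdf m (expR (f / 2)) y.
Proof.
rewrite normal_pdfE ?expR_eq0 // /normal_peak /normal_fun expR_half_sqr /gdens.
congr (_^-1 * expR _).
  by rewrite -[_ * pi *+ 2]mulr_natl; congr Num.sqrt; ring.
by rewrite -[expR f *+ 2]mulr_natl.
Qed.

Lemma gdens_ge0 m f y : 0 <= gdens m (expR f) y.
Proof. by rewrite gdens_expR expR_ge0. Qed.

(* With [v_i = expR f_i], [hmean_logvar f1 f2] is the log of the harmonic mean
   [2 v1 v2 / (v1 + v2)], the variance of the normalized geometric mean of the two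
   densities, and [ln_bc_var f1 f2] is the log Bhattacharyya coefficient when the
   means agree. *)
Definition hmean_logvar (f1 f2 : R) := ln 2 + f1 + f2 - ln (expR f1 + expR f2).

Definition wmean (m1 f1 m2 f2 : R) :=
  (m1 * expR f2 + m2 * expR f1) / (expR f1 + expR f2).

Definition ln_bc_var (f1 f2 : R) := hmean_logvar f1 f2 / 2 - (f1 + f2) / 4.

Definition ln_bhattacharyya (m1 f1 m2 f2 : R) :=
  ln_bc_var f1 f2 - (m1 - m2) ^+ 2 / (4 * (expR f1 + expR f2)).

Lemma expR_hmean_logvar f1 f2 :
  expR (hmean_logvar f1 f2) = 2 * expR f1 * expR f2 / (expR f1 + expR f2).
Proof.
have S_gt0 : 0 < expR f1 + expR f2 by rewrite addr_gt0 ?expR_gt0.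
by rewrite expRB !expRD !lnK ?posrE.
Qed.

Lemma sqrt_gdens_mul m1 f1 m2 f2 y :
  Num.sqrt (gdens m1 (expR f1) y) * Num.sqrt (gdens m2 (expR f2) y) =
  expR (ln_bhattacharyya m1 f1 m2 f2) *
  gdens (wmean m1 f1 m2 f2) (expR (hmean_logvar f1 f2)) y.
Proof.
rewrite !gdens_expR !sqrtr_expR -!expRD expR_hmean_logvar; congr expR.
rewrite /ln_bhattacharyya /ln_bc_var /wmean /hmean_logvar.
have := expR_gt0 f1; have := expR_gt0 f2 => e2 e1.
by field; rewrite !gt_eqF ?addr_gt0.
Qed.

Lemma hellinger_gdens m1 f1 m2 f2 :
  (\int[lebesgue_measure]_y
     ((Num.sqrt (gdens m1 (expR f1) y) - Num.sqrt (gdens m2 (expR f2) y)) ^+ 2)%:E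
   = (2 - 2 * expR (ln_bhattacharyya m1 f1 m2 f2))%:E)%E.
Proof.
set k := - 2 * expR (ln_bhattacharyya m1 f1 m2 f2).
set m3 := wmean m1 f1 m2 f2; set f3 := hmean_logvar f1 f2.
have i1 := @integrable_normal_pdf R m1 (expR (f1 / 2)).
have i2 := @integrable_normal_pdf R m2 (expR (f2 / 2)).
have i3 := @integrable_normal_pdf R m3 (expR (f3 / 2)).
transitivity (\int[lebesgue_measure]_y ((normal_pdf m1 (expR (f1 / 2)) y)%:E
    + ((normal_pdf m2 (expR (f2 / 2)) y)%:E
    + k%:E * (normal_pdf m3 (expR (f3 / 2)) y)%:E)))%E.
  apply: eq_integral => y _; rewrite -!EFinM -!EFinD; congr EFin.
  rewrite sqrrB !sqr_sqrtr ?gdens_ge0 // -mulrA sqrt_gdens_mul !gdens_normal_pdf /k.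
  ring.
rewrite integralD //; last by apply: integrableD => //; apply: integrableZl.
rewrite integralD //; last by apply: integrableZl.
by rewrite integralZl // !integral_normal_pdf -!EFinM -!EFinD /k; congr EFin; ring.
Qed.

End gaussian_hellinger.

Section bhattacharyya_bound.
Variable R : realType.
Implicit Types m f u w : R.

Lemma expR_sub_le u w : w <= u -> expR u - expR w <= (u - w) * expR u.
Proof.
move=> wu; have := expR_ge1Dx (w - u); have := expR_gt0 u.
have -> : expR w = expR u * expR (w - u) by rewrite -expRD addrC subrK.
nra.
Qed.

Lemma sqr_expR_sub_le u w :
  (expR u - expR w) ^+ 2 <= (u - w) ^+ 2 * (expR u ^+ 2 + expR w ^+ 2).
Proof.
wlog wu : u w / w <= u.
  move=> H; have [/H //|/ltW /H] := leP w u.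
  by rewrite [expR w ^+ 2 + _]addrC -[expR w - _]opprB -[w - u]opprB !sqrrN.
have d0 : 0 <= expR u - expR w by rewrite subr_ge0 ler_expR.
apply: (@le_trans _ _ (((u - w) * expR u) ^+ 2)).
  by rewrite ler_sqr ?nnegrE ?expR_sub_le // (le_trans d0 (expR_sub_le wu)).
by rewrite exprMn ler_wpM2l ?sqr_ge0 // lerDl sqr_ge0.
Qed.

Lemma sqr_expR_ln_bc_var f1 f2 : expR (ln_bc_var f1 f2) ^+ 2 =
  1 - (expR (f1 / 2) - expR (f2 / 2)) ^+ 2 / (expR f1 + expR f2).
Proof.
have -> : ln_bc_var f1 f2 = (hmean_logvar f1 f2 - (f1 / 2 + f2 / 2)) / 2.
  by rewrite /ln_bc_var; field.
rewrite expR_half_sqr expRB expR_hmean_logvar expRD -[in LHS]expR_half_sqr.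
rewrite -[expR f1]expR_half_sqr -[expR f2]expR_half_sqr.
have := expR_gt0 (f1 / 2); have := expR_gt0 (f2 / 2) => b0 a0.
by field; rewrite !gt_eqF // ?mulr_gt0 // addr_gt0 // exprn_gt0.
Qed.

Lemma hellinger_gdens_le m1 f1 m2 f2 :
  2 - 2 * expR (ln_bhattacharyya m1 f1 m2 f2) <=
  (f1 - f2) ^+ 2 / 2 + (m1 - m2) ^+ 2 / (2 * expR f2).
Proof.
set K := expR (ln_bc_var f1 f2); set S := expR f1 + expR f2.
set D := (m1 - m2) ^+ 2 / (4 * S).
have S_gt0 : 0 < S by rewrite addr_gt0 ?expR_gt0.
have e2_gt0 := expR_gt0 f2.
have K0 : 0 <= K := expR_ge0 _.
have K2 := sqr_expR_ln_bc_var f1 f2; rewrite -/K -/S in K2.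
have K2_le : 1 - K ^+ 2 <= (f1 / 2 - f2 / 2) ^+ 2.
  have -> : 1 - K ^+ 2 = (expR (f1 / 2) - expR (f2 / 2)) ^+ 2 / S by rewrite K2; ring.
  rewrite ler_pdivrMr // /S -(expR_half_sqr f1) -(expR_half_sqr f2).
  exact: sqr_expR_sub_le.
have K1 : K <= 1.
  suff : K ^+ 2 <= 1 by nra.
  by rewrite K2 lerBlDr lerDl divr_ge0 ?sqr_ge0 ?ltW.
have D0 : 0 <= D by rewrite divr_ge0 ?sqr_ge0 ?mulr_ge0 ?ltW.
have DS : D <= (m1 - m2) ^+ 2 / (4 * expR f2).
  rewrite ler_pdivrMr ?mulr_gt0 // mulrAC ler_pdivlMr ?mulr_gt0 //.
  by rewrite ler_wpM2l ?sqr_ge0 // ler_pM2l // lerDr expR_ge0.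
have eD := expR_ge1Dx (- D).
have -> : expR (ln_bhattacharyya m1 f1 m2 f2) = K * expR (- D) by rewrite -expRD.
have -> : (f1 - f2) ^+ 2 / 2 = 2 * (f1 / 2 - f2 / 2) ^+ 2 by field.
have -> : (m1 - m2) ^+ 2 / (2 * expR f2) = 2 * ((m1 - m2) ^+ 2 / (4 * expR f2)).
  by field; rewrite gt_eqF.
nra.
Qed.

End bhattacharyya_bound.

Section measurability.
Variables (d : measure_display) (T : measurableType d) (R : realType).

Lemma measurable_fun_invr_pos (g : T -> R) :
  measurable_fun setT g -> (forall x, 0 < g x) -> measurable_fun setT (fun x => (g x)^-1).
Proof.
move=> mg g0; rewrite (_ : (fun x => _) = @expR R \o (-%R \o (@ln R \o g))).
  apply: measurableT_comp; first exact: measurable_expR.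
  apply: measurableT_comp; first exact: oppr_measurable.
  by apply: measurableT_comp; first exact: measurable_ln.
by apply/funext => x /=; rewrite expRN lnK ?posrE.
Qed.

Lemma measurable_ln_bhattacharyya (a b c e : T -> R) :
  measurable_fun setT a -> measurable_fun setT b ->
  measurable_fun setT c -> measurable_fun setT e ->
  measurable_fun setT (fun x => ln_bhattacharyya (a x) (b x) (c x) (e x)).
Proof.
move=> ma mb mc me.
have mS : measurable_fun setT (fun x => expR (b x) + expR (e x)).
  by apply: measurable_funD; apply: measurableT_comp => //; exact: measurable_expR.
have mlnS : measurable_fun setT (fun x => ln (expR (b x) + expR (e x))).
  by apply: measurableT_comp => //; exact: measurable_ln.
have mV : measurable_fun setT (fun x => (4 * (expR (b x) + expR (e x)))^-1).
  apply: measurable_fun_invr_pos => [|x]; last by rewrite mulr_gt0 ?addr_gt0 ?expR_gt0.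
  by apply: measurable_funM => //; exact: measurable_cst.
rewrite /ln_bhattacharyya /ln_bc_var /hmean_logvar.
by repeat (apply: measurable_funB || apply: measurable_funD || apply: measurable_funM
  || apply: measurable_funX || exact: measurable_cst || assumption).
Qed.

End measurability.

Section hellinger_L2.
Variables (d : measure_display) (T : measurableType d) (R : realType).
Implicit Types (Q : probability T R) (c s : (T -> R) * (T -> R)).

Lemma L2dist_le_integral_sqr Q (g1 g2 : T -> R) (a : R) : 0 <= a ->
  (L2dist Q g1 g2 <= a%:E)%E -> (\int[Q]_x ((g1 x - g2 x) ^+ 2)%:E <= (a ^+ 2)%:E)%E.
Proof.
rewrite /L2dist => a0 h.
have two_neq0 : (2 : R) != 0 by rewrite pnatr_eq0.
have := @poweR_Lnorm _ _ _ Q (fun x => (g1 x - g2 x)%:E) 2 two_neq0.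
under eq_integral => x _ do
  rewrite abse_EFin poweR_EFin powR_mulrn // real_normK ?num_real //.
move=> <-; have := @gt0_ler_poweR R 2 (ler0n _ 2) _ (a%:E) _ _ h.
rewrite poweR_EFin powR_mulrn //; apply.
- by rewrite in_itv /= Lnorm_ge0 leey.
- by rewrite in_itv /= lee_fin a0 leey.
Qed.

Lemma integral_sqr_comb (mu : {measure set T -> \bar R}) (a b : R) (u v : T -> R) :
  0 <= a -> 0 <= b -> measurable_fun setT u -> measurable_fun setT v ->
  (\int[mu]_x ((a * u x ^+ 2 + b * v x ^+ 2)%:E) =
   a%:E * \int[mu]_x ((u x ^+ 2)%:E) + b%:E * \int[mu]_x ((v x ^+ 2)%:E))%E.
Proof.
move=> a0 b0 m_u m_v.
under eq_integral => x _ do rewrite EFinD.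
rewrite ge0_integralD //.
all: try by move=> x _; rewrite lee_fin mulr_ge0 ?sqr_ge0.
all: try by apply/measurable_EFinP; apply: measurable_funM => //; exact: measurable_funX.
by congr (_ + _); under eq_integral => x _ do rewrite EFinM;
  rewrite ge0_integralZl_EFin //; try (by move=> x _; rewrite lee_fin sqr_ge0);
  apply/measurable_EFinP; exact: measurable_funX.
Qed.

Lemma hell2_cdens Q c s : hell2 Q c s =
  (\int[Q]_x (2 - 2 * expR (ln_bhattacharyya (c.1 x) (c.2 x) (s.1 x) (s.2 x)))%:E)%E.
Proof. by apply: eq_integral => x _; rewrite /cdens hellinger_gdens. Qed.

Lemma hell2_le Q (A : set T) c s (N : R) :
  measurable A -> Q A = 1%E ->
  measurable_fun setT c.1 -> measurable_fun setT c.2 ->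
  measurable_fun setT s.1 -> measurable_fun setT s.2 ->
  (forall x, A x -> `|s.2 x| <= N) ->
  (hell2 Q c s <= (2^-1)%:E * \int[Q]_x ((c.2 x - s.2 x) ^+ 2)%:E
                  + (expR N / 2)%:E * \int[Q]_x ((c.1 x - s.1 x) ^+ 2)%:E)%E.
Proof.
move=> mA QA mc1 mc2 ms1 ms2 sN.
have md2 := measurable_funB mc2 ms2; have md1 := measurable_funB mc1 ms1.
rewrite hell2_cdens -(integral_sqr_comb _ _ _ md2 md1) ?invr_ge0 ?divr_ge0 ?expR_ge0 //.
apply: ae_ge0_le_integral => //.
- by move=> x _; rewrite -hellinger_gdens; apply: integral_ge0 => y _; rewrite lee_fin sqr_ge0.
- apply/measurable_EFinP; apply: measurable_funB; first exact: measurable_cst.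
  apply: measurable_funM; first exact: measurable_cst.
  by apply: measurableT_comp; [exact: measurable_expR|exact: measurable_ln_bhattacharyya].
- by move=> x _; rewrite lee_fin addr_ge0 // mulr_ge0 ?sqr_ge0 ?invr_ge0 ?divr_ge0 ?expR_ge0.
- by apply/measurable_EFinP; apply: measurable_funD; apply: measurable_funM => //;
    apply: measurable_funX.
exists (~` A); split; first exact: measurableC.
  by rewrite /= probability_setC // QA subee.
move=> x /= le_x Ax; apply: le_x => _; rewrite lee_fin.
apply: (le_trans (hellinger_gdens_le _ _ _ _)); rewrite [_ / 2]mulrC lerD2l.
have : (expR (s.2 x))^-1 <= expR N.
  by rewrite -expRN ler_expR; move: (sN x Ax); rewrite ler_norml => /andP[? _]; lra.
have := sqr_ge0 (c.1 x - s.1 x); rewrite invfM; nra.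
Qed.

Lemma dn_le Q (A : set T) c s (N eps : R) :
  measurable A -> Q A = 1%E -> 0 <= N -> 0 <= eps ->
  measurable_fun setT c.1 -> measurable_fun setT c.2 ->
  measurable_fun setT s.1 -> measurable_fun setT s.2 ->
  (forall x, A x -> `|s.2 x| <= N) ->
  (L2dist Q c.1 s.1 <= (eps / expR N)%:E)%E -> (L2dist Q c.2 s.2 <= eps%:E)%E ->
  (dn Q c s <= eps%:E)%E.
Proof.
move=> mA QA N0 e0 mc1 mc2 ms1 ms2 sN l1 l2.
have eN := expR_gt0 N.
have le_eps2 : (hell2 Q c s <= (eps ^+ 2)%:E)%E.
  apply: (le_trans (hell2_le mA QA mc1 mc2 ms1 ms2 sN)).
  have I2 := L2dist_le_integral_sqr e0 l2.
  have I1 := L2dist_le_integral_sqr (divr_ge0 e0 (ltW eN)) l1.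
  apply: (le_trans (leeD (lee_wpmul2l _ I2) (lee_wpmul2l _ I1))).
  - by rewrite lee_fin invr_ge0.
  - by rewrite lee_fin divr_ge0 ?ltW.
  rewrite -!EFinM -EFinD lee_fin.
  have -> : expR N / 2 * (eps / expR N) ^+ 2 = eps ^+ 2 / expR N / 2.
    by field; rewrite gt_eqF.
  have : eps ^+ 2 / expR N <= eps ^+ 2.
    by rewrite ler_pdivrMr // ler_peMr ?sqr_ge0 // -expR0 ler_expR.
  lra.
move: le_eps2; rewrite /dn; case: (hell2 Q c s) => [r||] //=; rewrite !lee_fin // => r_le.
by rewrite -(ger0_norm e0) -sqrtr_sqr ler_wsqrtr.
Qed.

End hellinger_L2.

Section covering_numbers.
Variable R : realType.

Definition is_cover (U : Type) (Cen : set U) (rho : U -> U -> \bar R) (eps : R)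
    (S : set U) (n : nat) :=
  exists c : 'I_n -> U,
    (forall i, Cen (c i)) /\ (forall s, S s -> exists i, (rho (c i) s <= eps%:E)%E).

Lemma covnum_le_cover (U : Type) (Cen : set U) (rho : U -> U -> \bar R) (eps : R)
    (S : set U) n :
  is_cover Cen rho eps S n -> (covnum Cen rho eps S <= n%:R%:E)%E.
Proof. by move=> cov; apply: ereal_inf_lbound; exists n. Qed.

Lemma covnum_attained (U : Type) (Cen : set U) (rho : U -> U -> \bar R) (eps : R)
    (S : set U) :
  covnum Cen rho eps S = +oo%E \/
  exists n, is_cover Cen rho eps S n /\ covnum Cen rho eps S = n%:R%:E.
Proof.
case: (pselect (exists n, is_cover Cen rho eps S n)) => [[n0 cov0]|no_cover]; last first.
  by left; apply/ereal_inf_pinfty => y [n cov _]; case: no_cover; exists n.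
right; have ex : exists n, `[< is_cover Cen rho eps S n >] by exists n0; apply/asboolP.
case: (ex_minnP ex) => n /asboolP cov n_min; exists n; split => //.
apply/eqP; rewrite eq_le covnum_le_cover //=.
apply: le_ereal_inf_tmp => _ [m cov_m <-].
by rewrite lee_fin ler_nat; apply: n_min; apply/asboolP.
Qed.

Lemma is_cover_prod (U1 U2 : Type) (Cen1 : set U1) (Cen2 : set U2)
    (rho1 : U1 -> U1 -> \bar R) (rho2 : U2 -> U2 -> \bar R)
    (rho : U1 * U2 -> U1 * U2 -> \bar R) (e1 e2 e : R) (S1 : set U1) (S2 : set U2) a b :
  (forall c s, Cen1 c.1 -> Cen2 c.2 -> S1 s.1 -> S2 s.2 ->
     (rho1 c.1 s.1 <= e1%:E)%E -> (rho2 c.2 s.2 <= e2%:E)%E -> (rho c s <= e%:E)%E) ->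
  is_cover Cen1 rho1 e1 S1 a -> is_cover Cen2 rho2 e2 S2 b ->
  is_cover (Cen1 `*` Cen2) rho e (S1 `*` S2) (a * b).
Proof.
move=> rho_le [c1 [C1 cov1]] [c2 [C2 cov2]].
have card_ab : #|{: 'I_a * 'I_b}| = (a * b)%N by rewrite card_prod !card_ord.
exists (fun k => let p := enum_val (cast_ord (esym card_ab) k) in (c1 p.1, c2 p.2)).
split=> [k|s [s1 s2]]; first by split; [apply: C1|apply: C2].
have [i le_i] := cov1 _ s1; have [j le_j] := cov2 _ s2.
exists (cast_ord card_ab (enum_rank (i, j))).
by rewrite /= cast_ordK enum_rankK; exact: (rho_le (c1 i, c2 j) s (C1 i) (C2 j) s1 s2).
Qed.

Lemma ln_natr_ge0 (n : nat) : 0 <= ln (n%:R : R).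
Proof. by case: n => [|n]; [rewrite ln0|apply: ln_ge0; rewrite ler1n]. Qed.

Lemma ln_natr_le_mul (k a b : nat) :
  (k <= a * b)%N -> ln (k%:R : R) <= ln a%:R + ln b%:R.
Proof.
case: k => [|k] kab; first by rewrite ln0 // addr_ge0 ?ln_natr_ge0.
have /andP[a_gt0 b_gt0] : (0 < a)%N && (0 < b)%N by rewrite -muln_gt0 (leq_trans _ kab).
by rewrite -lnM ?posrE ?ltr0n // -natrM ler_ln ?posrE ?ltr0n ?muln_gt0 ?a_gt0 // ler_nat.
Qed.

Lemma elog_covnum_ge0 (U : Type) (Cen : set U) (rho : U -> U -> \bar R) (eps : R)
    (S : set U) :
  (0 <= elog (covnum Cen rho eps S))%E.
Proof.
by case: (covnum_attained Cen rho eps S) => [->|[n [_ ->]]] //=; rewrite lee_fin ln_natr_ge0.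
Qed.

Lemma elog_covnum_prod_le (U1 U2 : Type) (Cen1 : set U1) (Cen2 : set U2)
    (rho1 : U1 -> U1 -> \bar R) (rho2 : U2 -> U2 -> \bar R)
    (rho : U1 * U2 -> U1 * U2 -> \bar R) (e1 e2 e : R) (S1 : set U1) (S2 : set U2) :
  (forall c s, Cen1 c.1 -> Cen2 c.2 -> S1 s.1 -> S2 s.2 ->
     (rho1 c.1 s.1 <= e1%:E)%E -> (rho2 c.2 s.2 <= e2%:E)%E -> (rho c s <= e%:E)%E) ->
  (elog (covnum (Cen1 `*` Cen2) rho e (S1 `*` S2))
   <= elog (covnum Cen1 rho1 e1 S1) + elog (covnum Cen2 rho2 e2 S2))%E.
Proof.
move=> rho_le.
have ge0_neqNy (x : \bar R) : (0 <= x -> x != -oo)%E.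
  by move=> x0; rewrite gt_eqF // (lt_le_trans _ x0).
case: (covnum_attained Cen1 rho1 e1 S1) => [->|[a [cov1 ->]]].
  by rewrite /= addye ?leey // ge0_neqNy ?elog_covnum_ge0.
case: (covnum_attained Cen2 rho2 e2 S2) => [->|[b [cov2 ->]]].
  by rewrite /= addey ?leey // ge0_neqNy // lee_fin ln_natr_ge0.
have := covnum_le_cover (is_cover_prod rho_le cov1 cov2).
case: (covnum_attained (Cen1 `*` Cen2) rho e (S1 `*` S2)) => [->|[k [_ ->]]].
  by rewrite leye_eq.
by rewrite /= -EFinD !lee_fin ler_nat; exact: ln_natr_le_mul.
Qed.

End covering_numbers.

Lemma measurable_cube (R : realType) (d : nat) : measurable (cube R d).
Proof.
rewrite (_ : cube R d = \bigcap_(i in [set: 'I_d])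
    ((fun x : d.-tuple R => tnth x i) @^-1` [set` `[0%R, 1%R]])).
  apply: fin_bigcap_measurable; first exact: finite_finset.
  move=> i _; rewrite -[X in measurable X]setTI.
  by apply: measurable_tnth => //; exact: measurable_itv.
apply/seteqP; split => x /=; first by move=> x01 i _; rewrite /= in_itv; exact: x01.
by move=> x01 i; have := x01 i I; rewrite /= in_itv.
Qed.

Unset Implicit Arguments. Set Strict Implicit.

Theorem lemma1 (R : realType) (d : nat) :
  exists C : R, 0 < C /\
  forall (Q : probability (d.-tuple R) R)
         (Theta_eta Theta_f : set (d.-tuple R -> R)) (Nn : R),
    Q (cube R d) = 1%E ->
    0 < Nn ->
    Theta_eta `<=` mfuns R (d.-tuple R) ->
    Theta_f `<=` mfuns R (d.-tuple R) ->
    (forall f, Theta_f f -> forall x, cube R d x -> `|f x| <= Nn) ->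
    forall eps : R, 0 < eps ->
    (elog (covnum (mfuns R (d.-tuple R) `*` mfuns R (d.-tuple R)) (dn Q)
             (3 * eps) (Theta_eta `*` Theta_f))
     <= C%:E * (elog (covnum (mfuns R (d.-tuple R)) (L2dist Q) (eps / expR Nn) Theta_eta)
                + elog (covnum (mfuns R (d.-tuple R)) (L2dist Q) eps Theta_f)))%E.
Proof.
exists 1; split => // Q Te Tf Nn Qcube Nn_gt0 Te_mfuns Tf_mfuns Tf_bound eps eps_gt0.
rewrite mul1e; apply: elog_covnum_prod_le => c s mc1 mc2 Te_s1 Tf_s2 le1 le2.
apply: (le_trans (dn_le (@measurable_cube R d) Qcube (ltW Nn_gt0) (ltW eps_gt0)
  mc1 mc2 (Te_mfuns _ Te_s1) (Tf_mfuns _ Tf_s2) (Tf_bound _ Tf_s2) le1 le2)).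
by rewrite lee_fin; lra.
Qed.
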